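(* Let $\mathbf K$ be a commutative field. (i) For all $p,q\in\mathbb N$, an element $X\in\mathbf K^{\mathcal M_{p\times q}}$ is a recurrence matrix if and only if it is a birecurrence matrix. (ii) The palindromic automorphism $\iota$ of $\mathbf K^{\mathcal M_{p\times q}}$ restricts to an involutive automorphism of $\mathrm{Rec}_{p\times q}(\mathbf K)$; consequently, if $\mathrm{char}\,\mathbf K\ne2$, for $A\in\mathrm{Rec}_{p\times q}(\mathbf K)$ the even and odd parts $A_+=(A+\iota A)/2$ and $A_-=(A-\iota A)/2$ lie in $\mathrm{Rec}_{p\times q}(\mathbf K)$. (iii) The palindromic automorphism yields an involutive automorphic functor of the category of recurrence matrices: it preserves each $\mathrm{Rec}_{p\times q}(\mathbf K)$ and satisfies $\iota(AB)=\iota(A)\iota(B)$ for $A\in\mathrm{Rec}_{p\times r}(\mathbf K)$, $B\in\mathrm{Rec}_{r\times q}(\mathbf K)$.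
   Context: $\mathcal M_{p\times q}$ is the monoid of pairs $(U,W)$ of words of common length with $U$ over $\{0,\dots,p-1\}$, $W$ over $\{0,\dots,q-1\}$. For $X:\mathcal M_{p\times q}\to\mathbf K$ (values $X[U,W]$): right shifts $(\rho(S,T)X)[U,W]=X[US,WT]$; left shifts $(\lambda(s_1\dots s_n,t_1\dots t_n)X)[U,W]=X[s_n\dots s_1U,t_n\dots t_1W]$. $X$ is a recurrence matrix (element of $\mathrm{Rec}_{p\times q}(\mathbf K)$) if the span of $\{\rho(S,T)X\}$ is finite-dimensional, and a birecurrence matrix if the span of $\{\lambda(S',T')\rho(S,T)X\}$ is finite-dimensional. The palindromic automorphism is $(\iota X)[s_1\dots s_n,t_1\dots t_n]=X[s_n\dots s_1,t_n\dots t_1]$. Matrix product: $(AB)[U,W]=\sum_{V\in\{0,\dots,r-1\}^l}A[U,V]B[V,W]$ for $(U,W)$ of length $l$. *)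

From HB Require Import structures.
From mathcomp Require Import all_boot all_order all_algebra.
Set Implicit Arguments. Unset Strict Implicit. Unset Printing Implicit Defensive.
Import GRing.Theory.
Local Open Scope ring_scope.

(* An element (U,W) of M_{p x q} (words of common length over {0..p-1} and
   {0..q-1}) is encoded as a single word over the product alphabet 'I_p * 'I_q:
   U = unzip1 s, W = unzip2 s. *)
Definition word (p q : nat) := seq ('I_p * 'I_q).

Definition kfun (K : fieldType) (p q : nat) := word p q -> K.

Definition rshift (K : fieldType) p q (t : word p q) (X : kfun K p q) : kfun K p q :=
  fun s => X (s ++ t).

(* left shift: (lambda(s1..sn,t1..tn) X)[U,W] = X[sn..s1 U, tn..t1 W] *)
Definition lshift (K : fieldType) p q (t : word p q) (X : kfun K p q) : kfun K p q :=
  fun s => X (rev t ++ s).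

Definition pal (K : fieldType) p q (X : kfun K p q) : kfun K p q :=
  fun s => X (rev s).

Definition fin_dim_span (K : fieldType) (T : Type) (S : (T -> K) -> Prop) : Prop :=
  exists (n : nat) (B : 'I_n -> T -> K),
    forall f, S f -> exists c : 'I_n -> K, forall w, f w = \sum_(i < n) c i * B i w.

Definition is_rec (K : fieldType) p q (X : kfun K p q) : Prop :=
  fin_dim_span (fun f => exists t, f = rshift t X).

Definition is_birec (K : fieldType) p q (X : kfun K p q) : Prop :=
  fin_dim_span (fun f => exists t' t, f = lshift t' (rshift t X)).

(* matrix product: (AB)[U,W] = sum_{V of length l} A[U,V] B[V,W] *)
Definition kmul (K : fieldType) p r q (A : kfun K p r) (B : kfun K r q) : kfun K p q :=
  fun s => \sum_(V : (size s).-tuple 'I_r)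
             A (zip (unzip1 s) V) * B (zip (V : seq 'I_r) (unzip2 s)).

Definition kid (K : fieldType) p : kfun K p p :=
  fun s => (unzip1 s == unzip2 s)%:R.

Definition kadd (K : fieldType) p q (X Y : kfun K p q) : kfun K p q := fun s => X s + Y s.
Definition kscale (K : fieldType) p q (a : K) (X : kfun K p q) : kfun K p q := fun s => a * X s.

(* A function X on words is recurrent iff its Hankel kernel H(u, v) = X(u v)
   has finite rank.  Finite rank yields interpolation formulas
   X(u v) = sum_x e_x(u) X(x v) = sum_y X(u y) e'_y(v) over finitely many
   words x, y, and applying both to u s v puts every two-sided shift
   s |-> X(u s v) in the span of the finitely many functions s |-> X(x s y).
   Reversal exchanges left and right shifts, so the palindromic map preserves
   birecurrence, hence recurrence; it commutes with the matrix product because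
   reversing the summation tuples is a bijection. *)
From Pilot Require Import Defs.
From mathcomp Require Import all_boot all_order all_algebra.
From mathcomp Require Import ring.
From Stdlib Require Import Classical FunctionalExtensionality.
Set Implicit Arguments. Unset Strict Implicit.
Import GRing.Theory.
Local Open Scope ring_scope.

Section FinDimSpan.
Variable K : fieldType.

Lemma fin_dim_span_seq (T I : Type) (r : seq I) (G : I -> T -> K)
    (S : (T -> K) -> Prop) :
  (forall f, S f -> exists c : I -> K, forall w, f w = \sum_(i <- r) c i * G i w) ->
  fin_dim_span S.
Proof.
case: r => [|i0 r] spanS.
  exists 0%N, (fun _ _ => 0) => f /spanS [c fE]; exists (fun _ => 0) => w.
  by rewrite fE big_nil big_ord0.
exists (size (i0 :: r)), (fun j => G (nth i0 (i0 :: r) j)) => f /spanS [c fE].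
exists (fun j => c (nth i0 (i0 :: r) j)) => w.
by rewrite fE (big_nth i0) big_mkord.
Qed.

Lemma fin_dim_span_precomp (T T' : Type) (g : T' -> T)
    (S : (T -> K) -> Prop) (S' : (T' -> K) -> Prop) :
  (forall f, S' f -> exists2 h, S h & forall w, f w = h (g w)) ->
  fin_dim_span S -> fin_dim_span S'.
Proof.
move=> S'S [n [B spanS]]; exists n, (fun i w => B i (g w)) => f /S'S [h /spanS [c hE] fE].
by exists c => w; rewrite fE hE.
Qed.

Lemma fin_dim_span_add (T : Type) (S1 S2 S : (T -> K) -> Prop) :
  (forall f, S f -> exists g h, [/\ S1 g, S2 h & forall w, f w = g w + h w]) ->
  fin_dim_span S1 -> fin_dim_span S2 -> fin_dim_span S.
Proof.
move=> SD [n1 [B1 span1]] [n2 [B2 span2]].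
pose G (i : 'I_n1 + 'I_n2) := match i with inl j => B1 j | inr k => B2 k end.
apply: (@fin_dim_span_seq _ _ (map inl (enum 'I_n1) ++ map inr (enum 'I_n2)) G).
move=> f /SD [g [h [/span1 [c1 gE] /span2 [c2 hE] fE]]].
exists (fun i => match i with inl j => c1 j | inr k => c2 k end) => w.
by rewrite fE gE hE big_cat !big_map.
Qed.

Lemma fin_dim_span_scale (T : Type) (S S' : (T -> K) -> Prop) (a : K) :
  (forall f, S' f -> exists2 g, S g & forall w, f w = a * g w) ->
  fin_dim_span S -> fin_dim_span S'.
Proof.
move=> S'S [n [B spanS]]; exists n, B => f /S'S [g /spanS [c gE] fE].
exists (fun i => a * c i) => w.
by rewrite fE gE mulr_sumr; apply: eq_bigr => i _; rewrite mulrA.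
Qed.

(* Elimination step: [g] is the part of [B 0] that the points of [P'] fail to
   reproduce; if it is nonzero somewhere, one more point [y] with [g y != 0]
   suffices after correcting the old weights. *)
Lemma span_interpolation (T : Type) n (B : 'I_n -> T -> K) :
  exists P : seq (T * (T -> K)), forall f : T -> K,
    (exists c : 'I_n -> K, forall w, f w = \sum_i c i * B i w) ->
    forall w, f w = \sum_(x <- P) f x.1 * x.2 w.
Proof.
elim: n B => [|n IHn] B.
  by exists [::] => f [c fE] w; rewrite fE big_ord0 big_nil.
have [P' interpP'] := IHn (fun i => B (lift ord0 i)).
pose g w := B ord0 w - \sum_(x <- P') B ord0 x.1 * x.2 w.
have fE : forall f c, (forall w, f w = \sum_i c i * B i w) ->
    forall w, f w = c ord0 * g w + \sum_(x <- P') f x.1 * x.2 w.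
  move=> f c fE w.
  pose f' w := \sum_(i < n) c (lift ord0 i) * B (lift ord0 i) w.
  have f'E : forall w, f' w = \sum_(x <- P') f' x.1 * x.2 w.
    by apply: interpP'; exists (fun i => c (lift ord0 i)).
  have fD : forall w, f w = c ord0 * B ord0 w + f' w.
    by move=> v; rewrite fE big_ord_recl.
  rewrite (fD w) (f'E w) /g.
  under [X in _ = _ + X]eq_bigr => x _ do rewrite fD mulrDl -mulrA.
  by rewrite big_split /= -mulr_sumr; ring.
have [g0 | /not_all_ex_not [y /eqP gy_neq0]] := classic (forall w, g w = 0).
  by exists P' => f [c /fE {}fE] w; rewrite fE g0 mulr0 add0r.
pose E w := g w / g y.
exists ((y, E) :: [seq (x.1, fun w => x.2 w - x.2 y * E w) | x <- P']).
move=> f [c /fE {}fE] w.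
rewrite big_cons big_map /=.
under eq_bigr => x _ do rewrite mulrBr mulrA.
by rewrite sumrB -mulr_suml (fE y) (fE w) /E; field.
Qed.

Lemma fin_dim_span_interpolation (T : Type) (S : (T -> K) -> Prop) :
  fin_dim_span S ->
  exists P : seq (T * (T -> K)), forall f, S f -> forall w, f w = \sum_(x <- P) f x.1 * x.2 w.
Proof.
move=> [n [B spanS]]; have [P interpP] := span_interpolation B.
by exists P => f /spanS; apply: interpP.
Qed.

Lemma kernel_interpolation (U V : Type) (H : U -> V -> K) :
  fin_dim_span (fun f => exists v, f = fun u => H u v) ->
  (exists P : seq (U * (U -> K)), forall u v, H u v = \sum_(x <- P) x.2 u * H x.1 v) /\
  (exists Q : seq (V * (V -> K)), forall u v, H u v = \sum_(y <- Q) H u y.1 * y.2 v).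
Proof.
move=> /fin_dim_span_interpolation [P interpP].
have colsE u v : H u v = \sum_(x <- P) x.2 u * H x.1 v.
  rewrite (interpP (fun u => H u v)); last by exists v.
  by apply: eq_bigr => x _; rewrite mulrC.
split; first by exists P.
suff /fin_dim_span_interpolation [Q interpQ] :
    fin_dim_span (fun f => exists u, f = H u).
  by exists Q => u v; apply: interpQ; exists u.
by apply: (fin_dim_span_seq (r := P) (G := fun x => H x.1)) => _ [u ->];
  exists (fun x => x.2 u).
Qed.

End FinDimSpan.

Section Recurrence.
Variable K : fieldType.

Lemma rec_birec p q (X : kfun K p q) : is_rec X -> is_birec X.
Proof.
move=> recX.
have [[P colsE] [Q rowsE]] := kernel_interpolation (H := fun u v => X (u ++ v)) recX.
apply: (fin_dim_span_seq (r := [seq (x, y) | x <- P, y <- Q])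
          (G := fun xy s => X (xy.1.1 ++ s ++ xy.2.1))).
move=> _ [t' [t ->]]; exists (fun xy => xy.1.2 (rev t') * xy.2.2 t) => s.
rewrite /Defs.lshift /Defs.rshift big_allpairs exchange_big /= rowsE.
apply: eq_bigr => y _; rewrite -catA colsE mulr_suml.
by apply: eq_bigr => x _ /=; ring.
Qed.

Lemma birec_rec p q (X : kfun K p q) : is_birec X -> is_rec X.
Proof.
apply: (fin_dim_span_precomp (g := id)) => _ [t ->].
by exists (Defs.lshift [::] (Defs.rshift t X)) => //; exists [::], t.
Qed.

Lemma rec_pal p q (X : kfun K p q) : is_rec X -> is_rec (pal X).
Proof.
move=> /rec_birec; apply: (fin_dim_span_precomp (g := @rev _)) => _ [t ->].
exists (Defs.lshift t (Defs.rshift [::] X)); first by exists t, [::].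
by move=> s; rewrite /Defs.lshift /Defs.rshift /pal rev_cat cats0.
Qed.

Lemma rec_scale p q a (X : kfun K p q) : is_rec X -> is_rec (kscale a X).
Proof.
apply: (fin_dim_span_scale (a := a)) => _ [t ->].
by exists (Defs.rshift t X) => //; exists t.
Qed.

Lemma rec_add p q (X Y : kfun K p q) : is_rec X -> is_rec Y -> is_rec (kadd X Y).
Proof.
apply: fin_dim_span_add => _ [t ->].
by exists (Defs.rshift t X), (Defs.rshift t Y); split=> //; [exists t | exists t].
Qed.

Lemma palK p q : cancel (@pal K p q) (@pal K p q).
Proof. by move=> X; apply: functional_extensionality => s; rewrite /pal revK. Qed.

Lemma sum_tuple_rev (T : finType) m n (F : seq T -> K) : m = n ->
  \sum_(V : m.-tuple T) F V = \sum_(V : n.-tuple T) F (rev V).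
Proof.
move=> <-; rewrite (reindex_inj (h := @rev_tuple _ _)) //.
by move=> V1 V2 /(congr1 (@rev _ \o val)) /=; rewrite !revK => /val_inj.
Qed.

Lemma pal_kmul p r q (A : kfun K p r) (B : kfun K r q) :
  pal (kmul A B) = kmul (pal A) (pal B).
Proof.
apply: functional_extensionality => s; rewrite /pal /kmul.
rewrite (sum_tuple_rev (fun V => A (zip _ V) * B (zip V _)) (size_rev s)).
apply: eq_bigr => V _.
by rewrite /unzip1 /unzip2 !map_rev !rev_zip // size_map size_tuple.
Qed.

Lemma pal_kid p : pal (@kid K p) = @kid K p.
Proof.
apply: functional_extensionality => s.
by rewrite /pal /kid /unzip1 /unzip2 !map_rev (inj_eq (can_inj (@revK _))).
Qed.

End Recurrence.

Theorem mainTheorem15 (K : fieldType) :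
  (* (i) recurrence <-> birecurrence *)
  (forall (p q : nat) (X : kfun K p q), is_rec X <-> is_birec X) /\
  (* (ii) iota is a linear involution of K^M preserving Rec_{p x q} *)
  (forall (p q : nat),
     (forall (a b : K) (X Y : kfun K p q),
        pal (kadd (kscale a X) (kscale b Y)) = kadd (kscale a (pal X)) (kscale b (pal Y))) /\
     (forall X : kfun K p q, pal (pal X) = X) /\
     (forall X : kfun K p q, is_rec X -> is_rec (pal X)) /\
     (2 \notin [pchar K] -> forall A : kfun K p q, is_rec A ->
        is_rec (kscale (2%:R)^-1 (kadd A (pal A))) /\
        is_rec (kscale (2%:R)^-1 (kadd A (kscale (-1) (pal A)))))) /\
  (* (iii) functoriality w.r.t. matrix product (and identities) *)
  (forall (p r q : nat) (A : kfun K p r) (B : kfun K r q),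
     is_rec A -> is_rec B -> pal (kmul A B) = kmul (pal A) (pal B)) /\
  (forall p : nat, pal (@kid K p) = @kid K p).
Proof.
split; first by move=> p q X; split; [exact: rec_birec | exact: birec_rec].
split; last by split=> [p r q A B _ _ | p]; [exact: pal_kmul | exact: pal_kid].
move=> p q; split; first by move=> a b X Y; exact: functional_extensionality.
split; first exact: palK.
split; first exact: rec_pal.
move=> _ A recA.
have recpalA := rec_pal recA.
by split; apply/rec_scale/rec_add => //; apply: rec_scale.
Qed.
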